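(* Let $A\in\mathbb{R}^{m\times m}$ be positive definite, let $B\in\mathbb{R}^{m\times n}$ ($n\le m$) be rank deficient, and let $\alpha\ge0$, $\beta>0$. Then $\operatorname{index}(I-\mathcal{T}(\alpha,\beta))=1$, i.e. $\operatorname{rank}(I-\mathcal{T}(\alpha,\beta))=\operatorname{rank}\big((I-\mathcal{T}(\alpha,\beta))^2\big)$.
   Context: A real square matrix $A$ is called positive definite if $x^TAx>0$ for all nonzero $x\in\mathbb{R}^m$ ($A$ need not be symmetric). For $\alpha\ge0,\beta>0$ define $\mathcal{P}_{MGSSP}=\begin{pmatrix}\alpha I+2A & 2B\\ -2B^T & \beta I\end{pmatrix}$, $\mathcal{Q}_{MGSSP}=\begin{pmatrix}\alpha I+A & B\\ -B^T & \beta I\end{pmatrix}$, and the MGSSP iteration matrix $\mathcal{T}(\alpha,\beta)=\mathcal{P}_{MGSSP}^{-1}\mathcal{Q}_{MGSSP}$ ($\mathcal{P}_{MGSSP}$ is nonsingular). The index of a square matrix $M$ is the smallest $k\ge0$ with $\operatorname{rank}(M^{k})=\operatorname{rank}(M^{k+1})$. *)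

(* real matrices over an arbitrary real field R
   (statement is purely algebraic). *)
From HB Require Import structures.
From mathcomp Require Import all_boot all_order all_algebra.
Set Implicit Arguments. Unset Strict Implicit. Unset Printing Implicit Defensive.
Import Order.TTheory GRing.Theory Num.Theory.
Local Open Scope ring_scope.

(* x^T A x > 0 for all nonzero x (A need not be symmetric) *)
Definition posdef (R : realFieldType) (m : nat) (A : 'M[R]_m) : Prop :=
  forall x : 'cV[R]_m, x != 0 -> 0 < (x^T *m A *m x) 0 0.

(* k-th power of a square matrix (works for any size N, including non-successor) *)
Definition mxpow (R : realFieldType) (N : nat) (M : 'M[R]_N) (k : nat) : 'M[R]_N :=
  iter k (mulmx M) 1%:M.

(* index: smallest k >= 0 with rank (M^k) = rank (M^(k+1)); such k <= N always exists,
   so searching in [0, N] finds the true minimum. *)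
Definition mx_index (R : realFieldType) (N : nat) (M : 'M[R]_N) : nat :=
  nth 0%N [seq k <- iota 0 N.+1 | \rank (mxpow M k) == \rank (mxpow M k.+1)] 0%N.

Definition P_MGSSP (R : realFieldType) (m n : nat) (A : 'M[R]_m) (B : 'M[R]_(m, n))
  (alpha beta : R) : 'M[R]_(m + n) :=
  block_mx (alpha%:M + 2%:R *: A) (2%:R *: B) (- (2%:R *: B^T)) (beta%:M).

Definition Q_MGSSP (R : realFieldType) (m n : nat) (A : 'M[R]_m) (B : 'M[R]_(m, n))
  (alpha beta : R) : 'M[R]_(m + n) :=
  block_mx (alpha%:M + A) B (- B^T) (beta%:M).

Definition T_MGSSP (R : realFieldType) (m n : nat) (A : 'M[R]_m) (B : 'M[R]_(m, n))
  (alpha beta : R) : 'M[R]_(m + n) :=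
  invmx (P_MGSSP A B alpha beta) *m Q_MGSSP A B alpha beta.

From HB Require Import structures.
From mathcomp Require Import all_boot all_order all_algebra.
From mathcomp Require Import lra.
Set Implicit Arguments. Unset Strict Implicit. Unset Printing Implicit Defensive.
Import Order.TTheory GRing.Theory Num.Theory.
Local Open Scope ring_scope.

(** With K := P - Q = [[A, B], [-B^T, 0]] one has I - T = P^-1 K, and K is
    singular because B is rank deficient, so the index is at least 1.  It is
    at most 1 when no nonzero row vector w has both w K = 0 and w P in the
    row space of K.  A block matrix with off-diagonal blocks C and -C^T has
    the quadratic form of its block diagonal, so w K = 0 gives w = (0, z)
    with z B^T = 0 by positive definiteness of A; then w P = (0, beta z), and
    writing beta z = y B shows beta z z^T = y B z^T = 0.  The same quadratic
    form identity applied to P shows that P is invertible. *)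

Lemma mx11_trmx (T : Type) (c : 'M[T]_1) : c^T = c.
Proof. by apply/matrixP => i j; rewrite !ord1 mxE. Qed.

Section Quadratic.

Variable R : realFieldType.

Lemma mulmx_trmx_ge0 k (u : 'rV[R]_k) : 0 <= (u *m u^T) 0 0.
Proof. by rewrite mxE; apply: sumr_ge0 => j _; rewrite mxE -expr2 sqr_ge0. Qed.

Lemma mulmx_trmx_eq0 k (u : 'rV[R]_k) : (u *m u^T) 0 0 = 0 -> u = 0.
Proof.
rewrite mxE => sum0; apply/matrixP => i j; rewrite ord1 mxE.
have sqr_ge0' j' : predT j' -> 0 <= u 0 j' * u^T j' 0.
  by rewrite mxE -expr2 sqr_ge0.
move/eqP: (psumr_eq0P sqr_ge0' sum0 (i := j) isT).
by rewrite mxE mulf_eq0 orbb => /eqP.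
Qed.

Lemma posdef_rV m (A : 'M[R]_m) (v : 'rV[R]_m) :
  posdef A -> v != 0 -> 0 < (v *m A *m v^T) 0 0.
Proof. by move=> pdA v_nz; rewrite -[v in v *m A]trmxK; apply: pdA; rewrite trmx_eq0. Qed.

Lemma posdef_rV_ge0 m (A : 'M[R]_m) (v : 'rV[R]_m) :
  posdef A -> 0 <= (v *m A *m v^T) 0 0.
Proof.
move=> pdA; have [->|v_nz] := eqVneq v 0; first by rewrite !mul0mx mxE.
exact/ltW/posdef_rV.
Qed.

Lemma posdef_rV_eq0 m (A : 'M[R]_m) (v : 'rV[R]_m) :
  posdef A -> (v *m A *m v^T) 0 0 = 0 -> v = 0.
Proof. by move=> pdA; apply: contra_eq => /(posdef_rV pdA) /lt0r_neq0. Qed.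

Lemma skew_block_form m n (D : 'M[R]_m) (C : 'M[R]_(m, n)) (E : 'M[R]_n)
    (x : 'rV[R]_m) (y : 'rV[R]_n) :
  row_mx x y *m block_mx D C (- C^T) E *m (row_mx x y)^T =
  x *m D *m x^T + y *m E *m y^T.
Proof.
rewrite mul_row_block tr_row_mx mul_row_col !mulmxDl mulmxN mulNmx.
have -> : y *m C^T *m x^T = x *m C *m y^T.
  by rewrite -[RHS]mx11_trmx !trmx_mul trmxK mulmxA.
by rewrite addrA addrNK.
Qed.

End Quadratic.

Lemma unitmx_rV_kernel0 (F : fieldType) n (M : 'M[F]_n) :
  (forall u : 'rV[F]_n, u *m M = 0 -> u = 0) -> M \in unitmx.
Proof.
move=> ker0; rewrite -row_free_unit -kermx_eq0.
apply: contraT => /rowV0Pn [u]; rewrite sub_kermx => /eqP uM0.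
by rewrite (ker0 _ uM0) eqxx.
Qed.

Section MGSSP.

Variables (R : realFieldType) (m n : nat) (A : 'M[R]_m) (B : 'M[R]_(m, n)).
Variables (alpha beta : R).
Hypotheses (pdA : posdef A) (alpha_ge0 : 0 <= alpha) (beta_gt0 : 0 < beta).

Definition saddle_mx : 'M[R]_(m + n) := block_mx A B (- B^T) 0.

Local Notation P := (P_MGSSP A B alpha beta).
Local Notation Q := (Q_MGSSP A B alpha beta).

Lemma P_MGSSP_form (x : 'rV[R]_m) (y : 'rV[R]_n) :
  (row_mx x y *m P *m (row_mx x y)^T) 0 0 =
  alpha * (x *m x^T) 0 0 + 2%:R * (x *m A *m x^T) 0 0 + beta * (y *m y^T) 0 0.
Proof.
rewrite /P_MGSSP -linearZ skew_block_form.
by rewrite mulmxDr mulmxDl !mul_mx_scalar -scalemxAr -!scalemxAl !mxE.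
Qed.

Lemma P_MGSSP_unit : P \in unitmx.
Proof.
apply: unitmx_rV_kernel0 => u uP0; rewrite -[u]hsubmxK in uP0 *.
move: (lsubmx u) (rsubmx u) => x y in uP0 *.
have := P_MGSSP_form x y; rewrite uP0 mul0mx mxE => form0.
have alpha_xx_ge0 := mulr_ge0 alpha_ge0 (mulmx_trmx_ge0 x).
have beta_yy_ge0 := mulr_ge0 (ltW beta_gt0) (mulmx_trmx_ge0 y).
have xAx_ge0 := posdef_rV_ge0 x pdA.
have /(posdef_rV_eq0 pdA) -> : (x *m A *m x^T) 0 0 = 0 by lra.
have /eqP : beta * (y *m y^T) 0 0 = 0 by lra.
by rewrite mulf_eq0 gt_eqF //= => /eqP /mulmx_trmx_eq0 ->; rewrite row_mx0.
Qed.

Lemma subr_P_Q_MGSSP : P - Q = saddle_mx.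
Proof.
rewrite /P_MGSSP /Q_MGSSP /saddle_mx opp_block_mx add_block_mx.
rewrite !scaler_nat !mulr2n opprD opprK; congr block_mx.
- by rewrite addrACA subrr add0r addrK.
- by rewrite addrK.
- by rewrite opprD addrNK.
- by rewrite subrr.
Qed.

Lemma subr1_T_MGSSP : 1%:M - T_MGSSP A B alpha beta = invmx P *m saddle_mx.
Proof. by rewrite -subr_P_Q_MGSSP mulmxBr mulVmx ?P_MGSSP_unit. Qed.

Lemma mxrank_saddle_lt : (\rank B < n)%N -> (\rank saddle_mx < m + n)%N.
Proof.
move=> rkB; rewrite /saddle_mx block_mxEv -addsmxE.
apply: leq_ltn_trans (mxrank_adds_leqif _ _).1 _.
have rk_bottom : \rank (row_mx (- B^T) (0 : 'M[R]_n)) = \rank B.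
  by rewrite -mxrank_tr tr_row_mx trmx0 rank_col_mx0 mxrank_tr mxrank_opp mxrank_tr.
by rewrite rk_bottom -addnS leq_add ?rank_leq_row.
Qed.

Lemma saddle_kernel (w : 'rV[R]_(m + n)) :
  w *m saddle_mx = 0 -> lsubmx w = 0 /\ rsubmx w *m B^T = 0.
Proof.
rewrite -[w]hsubmxK; move: (lsubmx w) (rsubmx w) => x z wK0.
have : (row_mx x z *m saddle_mx *m (row_mx x z)^T) 0 0 = 0.
  by rewrite wK0 mul0mx mxE.
rewrite skew_block_form mulmx0 mul0mx addr0 => /(posdef_rV_eq0 pdA) x0.
move: wK0; rewrite x0 row_mxKl row_mxKr mul_row_block !mul0mx !add0r mulmx0.
by rewrite -row_mx0 => /eq_row_mx [/eqP]; rewrite mulmxN oppr_eq0 => /eqP.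
Qed.

Lemma saddle_kernel_P_range0 (w : 'rV[R]_(m + n)) :
  w *m saddle_mx = 0 -> (w *m P <= saddle_mx)%MS -> w = 0.
Proof.
move=> /saddle_kernel [w1_0 zBt0] /submxP [y wP].
rewrite -[w]hsubmxK w1_0 in wP *; move: (rsubmx w) zBt0 wP => z zBt0.
rewrite -[y]hsubmxK /P_MGSSP /saddle_mx !mul_row_block !mul0mx !add0r mulmx0 addr0.
rewrite mul_mx_scalar => /eq_row_mx [_ y1B].
have : (lsubmx y *m B *m z^T) 0 0 = 0.
  by rewrite -mulmxA -[B]trmxK -trmx_mul zBt0 trmx0 mulmx0 mxE.
rewrite -y1B -scalemxAl mxE => /eqP; rewrite mulf_eq0 gt_eqF //= => /eqP zz0.
by rewrite (mulmx_trmx_eq0 zz0) row_mx0.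
Qed.

Lemma mxrank_sqr_invP_saddle (M := invmx P *m saddle_mx) :
  \rank (M *m M) = \rank M.
Proof.
have P_unit := P_MGSSP_unit.
apply/mxrank_injP; apply: contraT => /rowV0Pn [v].
rewrite sub_capmx => /andP [/submxP [D vDM]]; rewrite sub_kermx => /eqP vM0.
suff /(congr1 (mulmx^~ P)) : v *m invmx P = 0.
  by rewrite mulmxKV // mul0mx => ->; rewrite eqxx.
apply: saddle_kernel_P_range0; first by rewrite -mulmxA.
by rewrite mulmxKV // vDM /M mulmxA submxMl.
Qed.

End MGSSP.

Lemma mx_index_eq1 (R : realFieldType) N (M : 'M[R]_N) :
  (\rank M < N)%N -> \rank (M *m M) = \rank M -> mx_index M = 1%N.
Proof.
move=> rkM_lt rkMM; have N_gt0 : (0 < N)%N := leq_ltn_trans (leq0n _) rkM_lt.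
rewrite /mx_index.
have -> : iota 0 N.+1 = [:: 0%N, 1%N & iota 2 N.-1] by rewrite -{1}(prednK N_gt0).
by rewrite /mxpow /= mulmx1 mxrank1 rkMM eqxx eq_sym (ltn_eqF rkM_lt).
Qed.

Theorem lemma4p2 (R : realFieldType) (m n : nat) (A : 'M[R]_m) (B : 'M[R]_(m, n))
  (alpha beta : R) :
  (n <= m)%N -> posdef A -> (\rank B < n)%N -> 0 <= alpha -> 0 < beta ->
  mx_index (1%:M - T_MGSSP A B alpha beta) = 1%N.
Proof.
move=> _ pdA rkB alpha_ge0 beta_gt0.
rewrite subr1_T_MGSSP //; apply: mx_index_eq1.
- exact: leq_ltn_trans (mxrankM_maxr _ _) (mxrank_saddle_lt A rkB).
- exact: mxrank_sqr_invP_saddle.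
Qed.
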